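(* Let $(B,\le)$ be a properly ordered Bratteli diagram with $V_0=\{v^0\}$, $V_k=\{v_1^k,\dots,v_{n(k)}^k\}$, whose minimal path $e_{\min}=(e_1,e_2,\dots)$ satisfies $r(e_k)=v_1^k$ for all $k\ge1$, and let $(X_B,T_B)$ be the associated Bratteli–Vershik system. Then $(X_B,T_B)$ is weakly mixing if and only if for every $k\ge1$ there exists $n$ with $\{n,n+1\}\subseteq\mathcal N(C(e^k),C(e^k))$, where $e^k=(e_1,\dots,e_k)$.
   Context: Bratteli diagram: levels $V_k$, edges $E_k$ with $s(E_k)\subseteq V_{k-1}$, $r(E_k)\subseteq V_k$. An ordering linearly orders each $r^{-1}(v)$; finite paths between levels are ordered by comparing the last differing edge. $X_B$ is the space of infinite paths $(e_1,e_2,\dots)$ with $r(e_i)=s(e_{i+1})$; for a finite path $a=(a_1,\dots,a_k)$ from $v^0$, $C(a)$ is the cylinder of infinite paths beginning with $a$. Properly ordered: the diagram is simple and there are unique all-maximal and all-minimal infinite paths $x_{\max},x_{\min}$. The Vershik map $T_B$ sends $x_{\max}\mapsto x_{\min}$ and otherwise replaces the first non-maximal edge $e_k$ by its successor $f_k$ and $(e_1,\dots,e_{k-1})$ by the minimal path from $v^0$ to $s(f_k)$. $\mathcal N(U,W)=\{n\in\mathbb Z:T_B^nU\cap W\ne\emptyset\}$. Weakly mixing: $(X_B\times X_B,T_B\times T_B)$ is topologically transitive. *)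

From Stdlib Require Import Arith ZArith ClassicalEpsilon.

(* A Bratteli diagram, encoded with natural-number labels.
   - Level k has vertices 0, ..., nv k - 1  (vertex i stands for v^k_{i+1}).
   - "Edge index k" is the edge set E_{k+1} from level k to level k+1; its
     edges are 0, ..., ne k - 1, with source  src k e  (a vertex of level k)
     and range  rng k e  (a vertex of level k+1).
   - The ordering: two edges e, f of E_{k+1} with the same range are ordered
     by  rank k e < rank k f  (rank is required injective on each r^{-1}(v)),
     so each r^{-1}(v) is linearly ordered; every finite linear order arises so. *)
Record Bratteli := {
  nv : nat -> nat;
  ne : nat -> nat;
  src : nat -> nat -> nat;
  rng : nat -> nat -> nat;
  rank : nat -> nat -> nat
}.

Definition is_ordered_bratteli (B : Bratteli) : Prop :=
  nv B 0 = 1 /\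
  (forall k, 0 < nv B k) /\
  (forall k e, e < ne B k -> src B k e < nv B k /\ rng B k e < nv B (S k)) /\
  (forall k v, v < nv B k -> exists e, e < ne B k /\ src B k e = v) /\
  (forall k w, w < nv B (S k) -> exists e, e < ne B k /\ rng B k e = w) /\
  (forall k e f, e < ne B k -> f < ne B k -> rng B k e = rng B k f ->
     rank B k e = rank B k f -> e = f).

(* Infinite paths (x 0, x 1, ...) = (e_1, e_2, ...) : the space X_B. *)
Definition is_path (B : Bratteli) (x : nat -> nat) : Prop :=
  (forall k, x k < ne B k) /\
  (forall k, rng B k (x k) = src B (S k) (x (S k))).

Definition max_edge (B : Bratteli) (k e : nat) : Prop :=
  forall f, f < ne B k -> rng B k f = rng B k e -> rank B k f <= rank B k e.

Definition min_edge (B : Bratteli) (k e : nat) : Prop :=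
  forall f, f < ne B k -> rng B k f = rng B k e -> rank B k e <= rank B k f.

Definition all_max (B : Bratteli) (x : nat -> nat) : Prop :=
  forall k, max_edge B k (x k).

Definition all_min (B : Bratteli) (x : nat -> nat) : Prop :=
  forall k, min_edge B k (x k).

Definition connected (B : Bratteli) (k l v w : nat) : Prop :=
  k < l /\
  exists p : nat -> nat,
    (forall j, k <= j -> j < l -> p j < ne B j) /\
    src B k (p k) = v /\
    rng B (l - 1) (p (l - 1)) = w /\
    (forall j, k <= j -> S j < l -> rng B j (p j) = src B (S j) (p (S j))).

(* Simple: after telescoping, all incidence matrices are strictly positive. *)
Definition simple (B : Bratteli) : Prop :=
  forall k, exists l, k < l /\
    forall v w, v < nv B k -> w < nv B l -> connected B k l v w.

Definition properly_ordered (B : Bratteli) : Prop :=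
  is_ordered_bratteli B /\ simple B /\
  (exists x, is_path B x /\ all_max B x /\
     forall y, is_path B y -> all_max B y -> forall k, y k = x k) /\
  (exists x, is_path B x /\ all_min B x /\
     forall y, is_path B y -> all_min B y -> forall k, y k = x k).

(* The minimal and maximal infinite paths (well defined when properly ordered). *)
Definition xmin (B : Bratteli) : nat -> nat :=
  epsilon (inhabits (fun _ => 0)) (fun x => is_path B x /\ all_min B x).

Definition min_in (B : Bratteli) (k w : nat) : nat :=
  epsilon (inhabits 0)
    (fun e => e < ne B k /\ rng B k e = w /\ min_edge B k e).

Definition succ_edge (B : Bratteli) (k e : nat) : nat :=
  epsilon (inhabits 0)
    (fun f => f < ne B k /\ rng B k f = rng B k e /\ rank B k e < rank B k f /\
       forall g, g < ne B k -> rng B k g = rng B k e -> rank B k e < rank B k g ->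
         rank B k f <= rank B k g).

(* The minimal finite path from v^0 to vertex w of level k: its edges are the
   coordinates 0 .. k-1 (other coordinates are irrelevant). *)
Fixpoint min_path (B : Bratteli) (k w : nat) : nat -> nat :=
  match k with
  | 0 => fun _ => 0
  | S k' => fun j =>
      if Nat.eqb j k' then min_in B k' w
      else min_path B k' (src B k' (min_in B k' w)) j
  end.

Definition first_nonmax (B : Bratteli) (x : nat -> nat) : nat :=
  epsilon (inhabits 0)
    (fun k => ~ max_edge B k (x k) /\ forall j, j < k -> max_edge B j (x j)).

Definition vershik (B : Bratteli) (x : nat -> nat) : nat -> nat :=
  if excluded_middle_informative (all_max B x) then xmin B
  else
    let k := first_nonmax B x in
    let f := succ_edge B k (x k) in
    fun j => if Nat.ltb j k then min_path B k (src B k f) j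
             else if Nat.eqb j k then f else x j.

Definition cylinder (B : Bratteli) (k : nat) (x : nat -> nat) : (nat -> nat) -> Prop :=
  fun y => is_path B y /\ forall j, j < k -> y j = x j.

Definition open2 (B : Bratteli) (O : (nat -> nat) * (nat -> nat) -> Prop) : Prop :=
  (forall p, O p -> is_path B (fst p) /\ is_path B (snd p)) /\
  forall p, O p -> exists k, forall y z,
     cylinder B k (fst p) y -> cylinder B k (snd p) z -> O (y, z).

(* n in N(U,W) for a homeomorphism f:  f^n U meets W.  For n < 0 this is
   written equivalently (f bijective) as: W meets f^{|n|}-preimage ... i.e.
   some w in W has f^{|n|} w in U. *)
Definition return_time {A : Type} (f : A -> A) (U W : A -> Prop) (n : Z) : Prop :=
  if Z.leb 0 n then exists a, U a /\ W (Nat.iter (Z.abs_nat n) f a)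
  else exists a, W a /\ U (Nat.iter (Z.abs_nat n) f a).

Definition prod_map {A : Type} (f : A -> A) (p : A * A) : A * A :=
  (f (fst p), f (snd p)).

Definition weakly_mixing (B : Bratteli) : Prop :=
  forall U W, open2 B U -> open2 B W -> (exists p, U p) -> (exists p, W p) ->
    exists n : Z, return_time (prod_map (vershik B)) U W n.

From Stdlib Require Import Arith ZArith Lia Wf_nat Classical ClassicalEpsilon.

(* The cylinders [C(e^k)] form a neighbourhood basis of [x_min], and by simplicity every
   nonempty open set contains [T_B^a C(e^k)] for some [a] and [k]: connect a cylinder of the
   set to the vertex [v_1^l] of a deep level and climb the Kakutani-Rokhlin tower over it.
   With the continuity of [T_B], two consecutive return times of every [C(e^k)] therefore
   give two consecutive return times of every nonempty open set [U], hence return times [m]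
   and [m + d] of [U] for every [d]; these absorb the difference between meeting times of
   two pairs of open sets, which is transitivity of [T_B x T_B]. Conversely, transitivity
   of [T_B x T_B] applied to [C x C] and [C x T_B^-1 C] gives two consecutive return times
   of [C = C(e^k)]. *)

Lemma nat_least (Q : nat -> Prop) :
  (exists n, Q n) -> exists n, Q n /\ forall m, Q m -> n <= m.
Proof.
  intros HQ.
  destruct (dec_inh_nat_subset_has_unique_least_element Q (fun n => classic (Q n)) HQ)
    as [n [Hn _]].
  eauto.
Qed.

Lemma fun_bounded_lt (f : nat -> nat) (N : nat) :
  exists M, forall e, e < N -> f e <= M.
Proof.
  induction N as [|N [M HM]].
  - exists 0; lia.
  - exists (Nat.max M (f N)). intros e He.
    destruct (Nat.eq_dec e N) as [->|]; [lia|]. specialize (HM e ltac:(lia)). lia.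
Qed.

Lemma argmin_lt (r : nat -> nat) (P : nat -> Prop) (N : nat) :
  (exists e, e < N /\ P e) ->
  exists e, e < N /\ P e /\ forall f, f < N -> P f -> r e <= r f.
Proof.
  intros [e0 [He0 HPe0]].
  destruct (nat_least (fun v => exists e, e < N /\ P e /\ r e = v))
    as [v [[e [He [HPe <-]]] Hmin]]; [eauto|].
  exists e; repeat split; auto. intros f Hf HPf. apply Hmin; eauto.
Qed.

Lemma argmax_lt (r : nat -> nat) (P : nat -> Prop) (N : nat) :
  (exists e, e < N /\ P e) ->
  exists e, e < N /\ P e /\ forall f, f < N -> P f -> r f <= r e.
Proof.
  intros Hex. destruct (fun_bounded_lt r N) as [M HM].
  destruct (argmin_lt (fun e => M - r e) P N Hex) as [e [He [HPe Hmin]]].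
  exists e; repeat split; auto. intros f Hf HPf.
  specialize (Hmin f Hf HPf). pose proof (HM e He). pose proof (HM f Hf). lia.
Qed.

Lemma pigeonhole_infinitely_often (N : nat) (Q : nat -> nat -> Prop) :
  (forall L, exists l, L <= l /\ exists v, v < N /\ Q l v) ->
  exists v, v < N /\ forall L, exists l, L <= l /\ Q l v.
Proof.
  revert Q; induction N as [|N IH]; intros Q H.
  - destruct (H 0) as [l [_ [v [Hv _]]]]; lia.
  - destruct (classic (forall L, exists l, L <= l /\ Q l N)) as [HN|HN].
    + exists N; split; auto.
    + apply not_all_ex_not in HN as [L0 HL0].
      destruct (IH Q) as [v [Hv HQv]]; [|exists v; split; auto].
      intros L. destruct (H (Nat.max L L0)) as [l [Hl [v [Hv HQ]]]].
      exists l; split; [lia|]. exists v; split; auto.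
      destruct (Nat.eq_dec v N) as [->|]; [|lia].
      exfalso; apply HL0; exists l; split; [lia|auto].
Qed.

Definition glue (k : nat) (p y : nat -> nat) : nat -> nat :=
  fun j => if Nat.ltb j k then p j else y j.

Definition set_edge (k f : nat) (x : nat -> nat) : nat -> nat :=
  fun j => if Nat.eqb j k then f else x j.

Lemma glue_succ k p y j : y k = p k -> glue (S k) p y j = glue k p y j.
Proof.
  unfold glue. intros E.
  destruct (Nat.ltb_spec j (S k)), (Nat.ltb_spec j k); auto; try lia.
  replace j with k by lia. auto.
Qed.

Section OrderedDiagram.

Variable B : Bratteli.

Definition fin_path (k : nat) (p : nat -> nat) (w : nat) : Prop :=
  (forall j, j < k -> p j < ne B j) /\
  (forall j, S j < k -> rng B j (p j) = src B (S j) (p (S j))) /\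
  (forall j, S j = k -> rng B j (p j) = w) /\
  w < nv B k.

Definition is_first_nonmax (x : nat -> nat) (k : nat) : Prop :=
  ~ max_edge B k (x k) /\ forall j, j < k -> max_edge B j (x j).

Definition is_succ_edge (k e f : nat) : Prop :=
  f < ne B k /\ rng B k f = rng B k e /\ rank B k e < rank B k f /\
  forall g, g < ne B k -> rng B k g = rng B k e -> rank B k e < rank B k g ->
    rank B k f <= rank B k g.

Lemma first_nonmax_spec x : ~ all_max B x -> is_first_nonmax x (first_nonmax B x).
Proof.
  intros Hx. unfold first_nonmax. apply epsilon_spec.
  apply not_all_ex_not in Hx.
  destruct (nat_least _ Hx) as [k [Hk Hmin]].
  exists k. split; auto. intros j Hj. apply NNPP. intros Hc. specialize (Hmin j Hc). lia.
Qed.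

Lemma first_nonmax_eq x k : is_first_nonmax x k -> first_nonmax B x = k.
Proof.
  intros [H1 H2].
  assert (Hx : ~ all_max B x) by (intros Hc; apply H1, Hc).
  destruct (first_nonmax_spec x Hx) as [G1 G2].
  destruct (lt_eq_lt_dec (first_nonmax B x) k) as [[Hl|]|Hl]; auto.
  - exfalso; apply G1, H2, Hl.
  - exfalso; apply H1, G2, Hl.
Qed.

Lemma succ_edge_spec k e :
  ~ max_edge B k e -> is_succ_edge k e (succ_edge B k e).
Proof.
  intros He. unfold succ_edge. apply epsilon_spec.
  destruct (argmin_lt (rank B k)
              (fun f => rng B k f = rng B k e /\ rank B k e < rank B k f) (ne B k))
    as [f [Hf [[Hf1 Hf2] Hmin]]].
  - apply NNPP; intros Hc; apply He. intros f Hf Hr.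
    apply NNPP; intros Hlt. apply Hc. exists f. repeat split; auto; lia.
  - exists f; repeat split; auto.
Qed.

Lemma vershik_max x : all_max B x -> vershik B x = xmin B.
Proof.
  intros H. unfold vershik. destruct (excluded_middle_informative (all_max B x)); tauto.
Qed.

Lemma vershik_nonmax x : ~ all_max B x ->
  vershik B x =
  glue (first_nonmax B x)
    (min_path B (first_nonmax B x)
       (src B (first_nonmax B x) (succ_edge B (first_nonmax B x) (x (first_nonmax B x)))))
    (set_edge (first_nonmax B x) (succ_edge B (first_nonmax B x) (x (first_nonmax B x))) x).
Proof.
  intros H. unfold vershik. destruct (excluded_middle_informative (all_max B x)); tauto.
Qed.

Lemma vershik_first_nonmax x k : is_first_nonmax x k ->
  vershik B x =
  glue k (min_path B k (src B k (succ_edge B k (x k)))) (set_edge k (succ_edge B k (x k)) x).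
Proof.
  intros Hk. rewrite <- (first_nonmax_eq x k Hk). apply vershik_nonmax.
  intros Hc. apply (proj1 Hk), Hc.
Qed.

Lemma glue_path k p w y : fin_path k p w ->
  (forall j, k <= j -> y j < ne B j) ->
  (forall j, k <= j -> rng B j (y j) = src B (S j) (y (S j))) ->
  src B k (y k) = w ->
  is_path B (glue k p y).
Proof.
  intros [P1 [P2 [P3 _]]] Y1 Y2 Y3. unfold glue. split; intros j.
  - destruct (Nat.ltb_spec j k); [apply P1 | apply Y1]; lia.
  - destruct (Nat.ltb_spec j k), (Nat.ltb_spec (S j) k); try lia.
    + apply P2; auto.
    + rewrite P3 by lia. replace (S j) with k by lia. auto.
    + apply Y2; lia.
Qed.

Lemma fin_path_connect K l p v w : fin_path K p v -> w < nv B l ->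
  connected B K l v w -> exists q, fin_path l (glue K p q) w.
Proof.
  intros [P1 [P2 [P3 _]]] Hw [HKl [q [Q1 [Q2 [Q3 Q4]]]]].
  exists q. unfold glue. repeat split; auto.
  - intros j Hj. destruct (Nat.ltb_spec j K); [apply P1 | apply Q1]; lia.
  - intros j Hj. destruct (Nat.ltb_spec j K), (Nat.ltb_spec (S j) K); try lia.
    + apply P2; auto.
    + rewrite P3 by lia. replace (S j) with K by lia. auto.
    + apply Q4; lia.
  - intros j Hj. destruct (Nat.ltb_spec j K); [lia|]. replace j with (l - 1) by lia. auto.
Qed.

Hypothesis HB : is_ordered_bratteli B.

Lemma src_lt k e : e < ne B k -> src B k e < nv B k.
Proof. intros He. apply (proj1 (proj2 (proj2 HB)) k e He). Qed.

Lemma rng_lt k e : e < ne B k -> rng B k e < nv B (S k).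
Proof. intros He. apply (proj1 (proj2 (proj2 HB)) k e He). Qed.

Lemma edge_eq_of_rank k e f : e < ne B k -> f < ne B k ->
  rng B k e = rng B k f -> rank B k e = rank B k f -> e = f.
Proof. apply (proj2 (proj2 (proj2 (proj2 (proj2 HB))))). Qed.

Lemma edge_into_exists k w : w < nv B (S k) -> exists e, e < ne B k /\ rng B k e = w.
Proof. apply (proj1 (proj2 (proj2 (proj2 (proj2 HB))))). Qed.

Lemma min_edge_unique k e f : e < ne B k -> f < ne B k -> rng B k e = rng B k f ->
  min_edge B k e -> min_edge B k f -> e = f.
Proof.
  intros He Hf Hr Me Mf. apply (edge_eq_of_rank k); auto.
  specialize (Me f Hf (eq_sym Hr)). specialize (Mf e He Hr). lia.
Qed.

Lemma succ_edge_unique k e f f' : is_succ_edge k e f -> is_succ_edge k e f' -> f = f'.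
Proof.
  intros [F1 [F2 [F3 F4]]] [G1 [G2 [G3 G4]]]. apply (edge_eq_of_rank k); auto; try congruence.
  specialize (F4 f' G1 G2 G3). specialize (G4 f F1 F2 F3). lia.
Qed.

Lemma pred_edge_exists k f : f < ne B k -> ~ min_edge B k f ->
  exists g, g < ne B k /\ rng B k g = rng B k f /\ rank B k g < rank B k f /\
    ~ max_edge B k g /\ succ_edge B k g = f.
Proof.
  intros Hf Hmin.
  destruct (argmax_lt (rank B k)
              (fun g => rng B k g = rng B k f /\ rank B k g < rank B k f) (ne B k))
    as [g [Hg [[Hg1 Hg2] Hmax]]].
  { apply NNPP; intros Hc; apply Hmin. intros g Hg Hr.
    apply NNPP; intros Hlt; apply Hc. exists g; repeat split; auto; lia. }
  assert (Hgnm : ~ max_edge B k g) by (intros Hm; specialize (Hm f Hf (eq_sym Hg1)); lia).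
  exists g; repeat split; auto.
  apply (succ_edge_unique k g); [apply succ_edge_spec; auto|].
  repeat split; auto. intros h Hh Hr Hlt.
  destruct (le_lt_dec (rank B k f) (rank B k h)); auto.
  specialize (Hmax h Hh (conj (eq_trans Hr Hg1) l)). lia.
Qed.

Lemma min_in_spec k w : w < nv B (S k) ->
  min_in B k w < ne B k /\ rng B k (min_in B k w) = w /\ min_edge B k (min_in B k w).
Proof.
  intros Hw. unfold min_in. apply epsilon_spec.
  destruct (argmin_lt (rank B k) (fun e => rng B k e = w) (ne B k))
    as [e [He [Hew Hmin]]]; [apply edge_into_exists, Hw|].
  exists e; repeat split; auto. intros f Hf Hr. apply Hmin; congruence.
Qed.

Lemma min_in_eq k e : e < ne B k -> min_edge B k e -> min_in B k (rng B k e) = e.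
Proof.
  intros He Me. destruct (min_in_spec k _ (rng_lt k e He)) as [M1 [M2 M3]].
  apply (min_edge_unique k); auto.
Qed.

Lemma fin_path_of_path x k : is_path B x -> fin_path k x (src B k (x k)).
Proof.
  intros [Hx1 Hx2]. repeat split; auto.
  - intros j <-. apply Hx2.
  - apply src_lt, Hx1.
Qed.

Lemma fin_path_prefix l p w K : fin_path l p w -> K < l -> fin_path K p (src B K (p K)).
Proof.
  intros [P1 [P2 _]] HK. repeat split.
  - intros; apply P1; lia.
  - intros; apply P2; lia.
  - intros j <-; apply P2; lia.
  - apply src_lt, P1, HK.
Qed.

Lemma fin_path_extend l p e : fin_path l p (src B l e) -> e < ne B l ->
  fin_path (S l) (set_edge l e p) (rng B l e).
Proof.
  intros [P1 [P2 [P3 _]]] He. unfold set_edge. repeat split.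
  - intros j Hj. destruct (Nat.eqb_spec j l) as [->|]; auto. apply P1; lia.
  - intros j Hj. destruct (Nat.eqb_spec j l), (Nat.eqb_spec (S j) l); try lia.
    + subst l. auto.
    + apply P2; lia.
  - intros j Hj. replace j with l by lia. rewrite Nat.eqb_refl. auto.
  - apply rng_lt, He.
Qed.

Lemma min_path_S k w j :
  min_path B (S k) w j =
  if Nat.eqb j k then min_in B k w else min_path B k (src B k (min_in B k w)) j.
Proof. reflexivity. Qed.

Lemma min_path_spec k w : w < nv B k ->
  fin_path k (min_path B k w) w /\ forall j, j < k -> min_edge B j (min_path B k w j).
Proof.
  revert w; induction k as [|k IH]; intros w Hw.
  - repeat split; intros; lia.
  - destruct (min_in_spec k w Hw) as [E1 [E2 E3]].
    destruct (IH _ (src_lt k _ E1)) as [F M].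
    split.
    + pose proof (fin_path_extend k _ _ F E1) as H. rewrite E2 in H. exact H.
    + intros j Hj. rewrite min_path_S.
      destruct (Nat.eqb_spec j k) as [->|]; auto. apply M; lia.
Qed.

Lemma min_path_unique k : forall p w, fin_path k p w ->
  (forall j, j < k -> min_edge B j (p j)) -> forall j, j < k -> p j = min_path B k w j.
Proof.
  induction k as [|k IH]; intros p w Hp M j Hj; [lia|].
  assert (Hpk : p k = min_in B k w).
  { destruct Hp as [P1 [_ [P3 _]]].
    rewrite <- (P3 k eq_refl), min_in_eq; auto. }
  rewrite min_path_S. destruct (Nat.eqb_spec j k) as [->|]; auto.
  rewrite <- Hpk. apply IH; [apply (fin_path_prefix (S k) p w); auto | intros; apply M; lia | lia].
Qed.

Lemma max_path_exists k : forall w, w < nv B k ->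
  exists p, fin_path k p w /\ forall j, j < k -> max_edge B j (p j).
Proof.
  induction k as [|k IH]; intros w Hw.
  - exists (fun _ => 0). repeat split; intros; lia.
  - destruct (argmax_lt (rank B k) (fun e => rng B k e = w) (ne B k))
      as [e [He [Hew Hmax]]]; [apply edge_into_exists, Hw|].
    destruct (IH _ (src_lt k e He)) as [p [Hp M]].
    exists (set_edge k e p). split.
    + rewrite <- Hew. apply fin_path_extend; auto.
    + intros j Hj. unfold set_edge. destruct (Nat.eqb_spec j k) as [->|].
      * intros f Hf Hr. apply Hmax; congruence.
      * apply M; lia.
Qed.

End OrderedDiagram.

Section ProperlyOrdered.

Variable B : Bratteli.
Hypothesis HP : properly_ordered B.

Let HB : is_ordered_bratteli B := proj1 HP.

Lemma xmin_spec : is_path B (xmin B) /\ all_min B (xmin B).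
Proof.
  pose proof HP as [_ [_ [_ [x [Hx [Hxm _]]]]]]. unfold xmin. apply epsilon_spec. eauto.
Qed.

Lemma xmin_unique y : is_path B y -> all_min B y -> forall k, y k = xmin B k.
Proof.
  intros Hy Hym k. destruct xmin_spec as [Hm Hmm].
  pose proof HP as [_ [_ [_ [x [_ [_ Hu]]]]]].
  rewrite (Hu y Hy Hym k), (Hu _ Hm Hmm k). reflexivity.
Qed.

Lemma vershik_path x : is_path B x -> is_path B (vershik B x).
Proof.
  intros Hx. destruct (classic (all_max B x)) as [Hm|Hm].
  - rewrite vershik_max by auto. apply xmin_spec.
  - pose proof (first_nonmax_spec B x Hm) as [Hk _].
    rewrite vershik_nonmax by auto.
    set (k := first_nonmax B x) in *.
    destruct Hx as [Hx1 Hx2].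
    destruct (succ_edge_spec B k (x k) Hk) as [S1 [S2 _]].
    set (f := succ_edge B k (x k)) in *.
    apply (glue_path B k _ (src B k f)); unfold set_edge.
    + apply (min_path_spec B HB), (src_lt B HB), S1.
    + intros j _. destruct (Nat.eqb_spec j k) as [->|]; auto.
    + intros j Hj. destruct (Nat.eqb_spec j k), (Nat.eqb_spec (S j) k); try lia.
      * subst j. rewrite S2. apply Hx2.
      * apply Hx2.
    + rewrite Nat.eqb_refl. auto.
Qed.

Lemma iter_vershik_path n x : is_path B x -> is_path B (Nat.iter n (vershik B) x).
Proof. intros Hx; induction n; simpl; auto using vershik_path. Qed.

Definition tower_reaches (l w : nat) (b : nat -> nat) : Prop :=
  exists a, forall x, is_path B x -> (forall j, j < l -> x j = min_path B l w j) ->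
    forall j, Nat.iter a (vershik B) x j = glue l b x j.

Lemma tower_reaches_min l w b : min_in B l w = b l ->
  tower_reaches l (src B l (b l)) b -> tower_reaches (S l) w b.
Proof.
  intros Hmi [a Ha]. exists a. intros x Hx Hpre j.
  assert (Hxl : x l = b l) by (rewrite Hpre, min_path_S, Nat.eqb_refl by lia; auto).
  rewrite glue_succ by auto. apply Ha; auto.
  intros i Hi. rewrite Hpre, min_path_S by lia.
  destruct (Nat.eqb_spec i l); [lia|]. rewrite Hmi. reflexivity.
Qed.

(* One step of [T_B] leads from the maximal path to [s(g)] followed by [g] to the
   minimal path to [s(f)] followed by the successor [f] of [g]. *)
Lemma tower_reaches_pred l w b g mx :
  (forall j, j < l -> max_edge B j (mx j)) -> ~ max_edge B l g -> succ_edge B l g = b l ->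
  tower_reaches l (src B l (b l)) b -> tower_reaches (S l) w (set_edge l g mx) ->
  tower_reaches (S l) w b.
Proof.
  intros Hmax Hgnm Hsucc [a2 Ha2] [a1 Ha1].
  exists (a2 + S a1). intros x Hx Hpre j.
  set (y := Nat.iter a1 (vershik B) x).
  assert (Hy : forall j, y j = glue (S l) (set_edge l g mx) x j) by (apply Ha1; auto).
  assert (Hyl : y l = g).
  { rewrite Hy. unfold glue, set_edge. rewrite Nat.eqb_refl.
    destruct (Nat.ltb_spec l (S l)); [auto|lia]. }
  assert (HTy : vershik B y =
                glue l (min_path B l (src B l (b l))) (set_edge l (b l) y)).
  { rewrite (vershik_first_nonmax B y l), Hyl, Hsucc; auto. split.
    - rewrite Hyl; auto.
    - intros i Hi. rewrite Hy. unfold glue, set_edge.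
      destruct (Nat.ltb_spec i (S l)), (Nat.eqb_spec i l); try lia. apply Hmax; auto. }
  rewrite Nat.iter_add, Nat.iter_succ. fold y. rewrite Ha2.
  - rewrite HTy. unfold glue, set_edge.
    destruct (Nat.ltb_spec j l), (Nat.ltb_spec j (S l)), (Nat.eqb_spec j l); try lia;
      subst; auto.
    rewrite Hy. unfold glue. destruct (Nat.ltb_spec j (S l)); [lia|auto].
  - apply vershik_path, iter_vershik_path, Hx.
  - intros i Hi. rewrite HTy. unfold glue. destruct (Nat.ltb_spec i l); [auto|lia].
Qed.

Lemma tower l : forall w b, fin_path B l b w -> tower_reaches l w b.
Proof.
  induction l as [|l IHl]; intros w b Hb.
  { exists 0. intros x _ _ j. reflexivity. }
  remember (rank B l (b l)) as n eqn:Hn. revert b Hb Hn.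
  induction n as [n IHn] using (well_founded_induction lt_wf); intros b Hb Hn.
  assert (Hf : b l < ne B l) by (apply (proj1 Hb); lia).
  assert (Hfw : rng B l (b l) = w) by (apply (proj1 (proj2 (proj2 Hb))); auto).
  pose proof (IHl _ _ (fin_path_prefix B HB (S l) b w l Hb (Nat.lt_succ_diag_r l))) as Hpre.
  destruct (classic (min_edge B l (b l))) as [Hmin|Hmin].
  - apply tower_reaches_min; auto. rewrite <- Hfw. apply min_in_eq; auto.
  - destruct (pred_edge_exists B HB l (b l) Hf Hmin) as [g [Hg [Hgw [Hlt [Hgnm Hsucc]]]]].
    destruct (max_path_exists B HB l _ (src_lt B HB l g Hg)) as [mx [Hmx Hmax]].
    apply (tower_reaches_pred l w b g mx); auto.
    apply (IHn (rank B l g)); [lia| |unfold set_edge; rewrite Nat.eqb_refl; reflexivity].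
    pose proof (fin_path_extend B HB l mx g Hmx Hg) as H. rewrite Hgw, Hfw in H. exact H.
Qed.

Definition min_anc (K l w : nat) : nat := src B K (min_path B l w K).

Lemma min_anc_lt K l w : K < l -> w < nv B l -> min_anc K l w < nv B K.
Proof.
  intros HK Hw. destruct (min_path_spec B HB l w Hw) as [[P1 _] _].
  apply (src_lt B HB), P1, HK.
Qed.

Lemma min_anc_step K l w : S K < l -> w < nv B l ->
  min_anc K l w = src B K (min_in B K (min_anc (S K) l w)).
Proof.
  intros HK Hw. destruct (min_path_spec B HB l w Hw) as [[P1 [P2 _]] M].
  unfold min_anc at 2. rewrite <- P2 by auto.
  rewrite min_in_eq; auto; [apply P1 | apply M]; lia.
Qed.

Lemma min_path_prefix K l w : K < l -> w < nv B l ->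
  forall j, j < K -> min_path B l w j = min_path B K (min_anc K l w) j.
Proof.
  intros HK Hw. destruct (min_path_spec B HB l w Hw) as [Hp M].
  apply (min_path_unique B HB); [apply (fin_path_prefix B HB l _ w); auto|].
  intros; apply M; lia.
Qed.

Definition on_deep_min_paths (K v : nat) : Prop :=
  forall L, exists l, L <= l /\ exists w, w < nv B l /\ K < l /\ min_anc K l w = v.

Lemma on_deep_min_paths_step K v : on_deep_min_paths K v ->
  exists c, c < nv B (S K) /\ src B K (min_in B K c) = v /\ on_deep_min_paths (S K) c.
Proof.
  intros Hv.
  destruct (pigeonhole_infinitely_often (nv B (S K))
    (fun l c => exists w, w < nv B l /\ S K < l /\ min_anc (S K) l w = c /\
                src B K (min_in B K c) = v)) as [c [Hc Hcl]].
  - intros L. destruct (Hv (Nat.max L (S (S K)))) as [l [Hl [w [Hw [HKl Ha]]]]].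
    exists l; split; [lia|]. exists (min_anc (S K) l w). split.
    + apply min_anc_lt; auto; lia.
    + exists w; repeat split; auto; try lia. rewrite <- min_anc_step; auto; lia.
  - exists c; split; auto. destruct (Hcl 0) as [l0 [_ [w0 [_ [_ [_ Hcv]]]]]].
    split; auto. intros L. destruct (Hcl L) as [l [Hl [w [Hw [H1 [H2 _]]]]]].
    exists l; split; auto. exists w; auto.
Qed.

Definition deep_child (K v : nat) : nat :=
  epsilon (inhabits 0)
    (fun c => c < nv B (S K) /\ src B K (min_in B K c) = v /\ on_deep_min_paths (S K) c).

Fixpoint deep_branch (K v n : nat) : nat :=
  match n with 0 => v | S n => deep_child (K + n) (deep_branch K v n) end.

Lemma deep_child_spec K v : on_deep_min_paths K v ->
  deep_child K v < nv B (S K) /\ src B K (min_in B K (deep_child K v)) = v /\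
  on_deep_min_paths (S K) (deep_child K v).
Proof. intros Hv. unfold deep_child. apply epsilon_spec, on_deep_min_paths_step, Hv. Qed.

Lemma deep_branch_on K v : on_deep_min_paths K v ->
  forall n, on_deep_min_paths (K + n) (deep_branch K v n).
Proof.
  intros Hv n. induction n as [|n IH]; [rewrite Nat.add_0_r; auto|].
  simpl. rewrite Nat.add_succ_r. apply deep_child_spec, IH.
Qed.

Lemma deep_branch_step K v : on_deep_min_paths K v -> forall n,
  deep_branch K v (S n) < nv B (S (K + n)) /\
  src B (K + n) (min_in B (K + n) (deep_branch K v (S n))) = deep_branch K v n.
Proof.
  intros Hv n. pose proof (deep_child_spec _ _ (deep_branch_on K v Hv n)). simpl. tauto.
Qed.

Lemma all_min_path_through K v : on_deep_min_paths K v -> v < nv B K ->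
  exists y, is_path B y /\ all_min B y /\ src B K (y K) = v.
Proof.
  intros Hv HvK. pose proof (deep_branch_step K v Hv) as Hstep.
  set (tail := fun j => min_in B j (deep_branch K v (S (j - K)))).
  assert (Htail : forall j, K <= j -> tail j < ne B j /\
            rng B j (tail j) = deep_branch K v (S (j - K)) /\ min_edge B j (tail j)).
  { intros j Hj. apply (min_in_spec B HB).
    replace (S j) with (S (K + (j - K))) by lia. apply Hstep. }
  assert (Hsrc : forall n, src B (K + n) (tail (K + n)) = deep_branch K v n).
  { intros n. unfold tail. replace (K + n - K) with n by lia. apply Hstep. }
  assert (Hsrc0 : src B K (tail K) = v).
  { pose proof (Hsrc 0) as H. rewrite Nat.add_0_r in H. exact H. }
  destruct (min_path_spec B HB K v HvK) as [Hp Hpm].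
  exists (glue K (min_path B K v) tail). split; [|split].
  - apply (glue_path B K _ v); auto; [intros; apply Htail; auto|].
    intros j Hj. rewrite (proj1 (proj2 (Htail j Hj))).
    replace (S j) with (K + S (j - K)) by lia. rewrite Hsrc. reflexivity.
  - intros j. unfold glue. destruct (Nat.ltb_spec j K); [apply Hpm; auto | apply Htail; lia].
  - unfold glue. rewrite Nat.ltb_irrefl. exact Hsrc0.
Qed.

Hypothesis Hxmin : forall k, rng B k (xmin B k) = 0.

Lemma xmin_src k : src B k (xmin B k) = 0.
Proof.
  destruct xmin_spec as [[Hx1 Hx2] _]. destruct k as [|k].
  - pose proof (src_lt B HB 0 _ (Hx1 0)) as H. rewrite (proj1 HB) in H. lia.
  - rewrite <- Hx2. apply Hxmin.
Qed.

Lemma xmin_prefix L j : j < L -> xmin B j = min_path B L 0 j.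
Proof.
  intros Hj. destruct xmin_spec as [Hx Hxm]. rewrite <- (xmin_src L).
  apply (min_path_unique B HB); auto. apply (fin_path_of_path B HB), Hx.
Qed.

(* Koenig's lemma: otherwise a vertex [v <> 0] of level [K] lies on infinitely long
   minimal paths, giving a second all-minimal infinite path besides [x_min]. *)
Lemma min_anc_eventually_zero K :
  exists L, forall l, L <= l -> K < l -> forall w, w < nv B l -> min_anc K l w = 0.
Proof.
  apply NNPP; intros Hc.
  destruct (pigeonhole_infinitely_often (nv B K)
    (fun l v => exists w, w < nv B l /\ K < l /\ min_anc K l w = v /\ v <> 0))
    as [v [Hv Hdeep]].
  { intros L. apply NNPP; intros Hc2. apply Hc. exists (Nat.max L (S K)).
    intros l Hl HKl w Hw. apply NNPP; intros Hne. apply Hc2. exists l; split; [lia|].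
    exists (min_anc K l w); split; [apply min_anc_lt; auto|]. exists w; auto. }
  destruct (Hdeep 0) as [l [_ [w [_ [_ [_ Hv0]]]]]].
  destruct (all_min_path_through K v) as [y [Hy [Hym Hyv]]]; auto.
  { intros L. destruct (Hdeep L) as [l' [Hl [w' [Hw [H1 [H2 _]]]]]].
    exists l'; split; auto. exists w'; auto. }
  apply Hv0. rewrite <- Hyv, (xmin_unique y Hy Hym K). apply xmin_src.
Qed.

Lemma min_path_eventually_xmin K :
  exists K0, forall l, K0 <= l -> forall w, w < nv B l ->
    forall j, j < K -> min_path B l w j = xmin B j.
Proof.
  destruct (min_anc_eventually_zero K) as [L HL]. exists (Nat.max L (S K)).
  intros l Hl w Hw j Hj.
  rewrite (min_path_prefix K l w), (HL l) by (auto; lia).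
  symmetry. apply xmin_prefix, Hj.
Qed.

(* Continuity at [x_max] is where [min_path_eventually_xmin] is needed: [T_B] sends
   paths close to [x_max] to paths starting with a minimal path from a deep level. *)
Lemma vershik_continuous x : is_path B x -> forall K, exists K',
  forall y, is_path B y -> (forall j, j < K' -> y j = x j) ->
    forall j, j < K -> vershik B y j = vershik B x j.
Proof.
  intros Hx K. destruct (classic (all_max B x)) as [Hm|Hm].
  - destruct (min_path_eventually_xmin K) as [K0 HK0]. exists (Nat.max K0 K).
    intros y Hy Hyx j Hj. rewrite (vershik_max B x Hm).
    destruct (classic (all_max B y)) as [Hmy|Hmy]; [rewrite vershik_max; auto|].
    destruct (first_nonmax_spec B y Hmy) as [N1 _].
    assert (Hk : Nat.max K0 K <= first_nonmax B y).
    { destruct (le_lt_dec (Nat.max K0 K) (first_nonmax B y)); auto.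
      exfalso. apply N1. rewrite Hyx; auto. }
    destruct (succ_edge_spec B _ _ N1) as [S1 _].
    rewrite vershik_nonmax by auto. unfold glue.
    destruct (Nat.ltb_spec j (first_nonmax B y)); [|lia].
    apply HK0; [lia | apply (src_lt B HB), S1 | exact Hj].
  - destruct (first_nonmax_spec B x Hm) as [N1 N2].
    exists (Nat.max (S (first_nonmax B x)) K). intros y Hy Hyx j Hj.
    assert (HF : is_first_nonmax B y (first_nonmax B x)).
    { split; [rewrite Hyx by lia; auto|]. intros i Hi. rewrite Hyx by lia. auto. }
    rewrite (vershik_first_nonmax B y _ HF), (vershik_nonmax B x Hm).
    rewrite (Hyx (first_nonmax B x)) by lia. unfold glue, set_edge.
    destruct (Nat.ltb_spec j (first_nonmax B x)), (Nat.eqb_spec j (first_nonmax B x)); auto.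
    apply Hyx; lia.
Qed.

Lemma iter_vershik_continuous n : forall x, is_path B x -> forall K, exists K',
  forall y, is_path B y -> (forall j, j < K' -> y j = x j) ->
    forall j, j < K -> Nat.iter n (vershik B) y j = Nat.iter n (vershik B) x j.
Proof.
  induction n as [|n IH]; intros x Hx K.
  - exists K. intros y _ H j Hj. apply H, Hj.
  - destruct (vershik_continuous _ (iter_vershik_path n x Hx) K) as [K1 HK1].
    destruct (IH x Hx K1) as [K' HK']. exists K'. intros y Hy Hyx j Hj. simpl.
    apply HK1; auto. apply iter_vershik_path, Hy.
Qed.

End ProperlyOrdered.

Definition meets {X : Type} (T : X -> X) (U W : X -> Prop) (n : nat) : Prop :=
  exists x, U x /\ W (Nat.iter n T x).

Definition cap_preimage {X : Type} (T : X -> X) (U : X -> Prop) (n : nat) (W : X -> Prop) :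
  X -> Prop :=
  fun x => U x /\ W (Nat.iter n T x).

Section ConsecutiveReturns.

Variables (X : Type) (T : X -> X) (is_open : (X -> Prop) -> Prop) (C : nat -> X -> Prop).

Hypothesis open_cap : forall U W n, is_open U -> is_open W -> is_open (cap_preimage T U n W).
Hypothesis C_open : forall L, is_open (C L).
Hypothesis C_antitone : forall L L' x, L <= L' -> C L' x -> C L x.
Hypothesis C_consecutive : forall L, exists p, meets T (C L) (C L) p /\ meets T (C L) (C L) (S p).
Hypothesis C_translate_into_open : forall U, is_open U -> (exists x, U x) ->
  exists L a, forall x, C L x -> U (Nat.iter a T x).

Lemma meets_translate U L a p : (forall x, C L x -> U (Nat.iter a T x)) ->
  meets T (C L) (C L) p -> meets T U U p.
Proof.
  intros Ha [x [Hx HTx]]. exists (Nat.iter a T x). split; auto.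
  rewrite <- Nat.iter_add, Nat.add_comm, Nat.iter_add. auto.
Qed.

Lemma open_consecutive U : is_open U -> (exists x, U x) ->
  exists p, meets T U U p /\ meets T U U (S p).
Proof.
  intros HU HU0. destruct (C_translate_into_open U HU HU0) as [L [a Ha]].
  destruct (C_consecutive L) as [p [Hp HSp]].
  exists p. split; eapply meets_translate; eauto.
Qed.

Lemma open_large_return m : forall U, is_open U -> (exists x, U x) ->
  exists r, m <= r /\ meets T U U r.
Proof.
  induction m as [|m IH]; intros U HU [x0 Hx0].
  - exists 0. split; auto. exists x0; auto.
  - destruct (open_consecutive U HU (ex_intro _ x0 Hx0)) as [p [_ [x Hx]]].
    destruct (IH (cap_preimage T U (S p) U)) as [r [Hr [z [[Hz _] [_ HTz]]]]];
      [apply open_cap; auto | exists x; auto |].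
    exists (S p + r). split; [lia|]. exists z. split; auto. rewrite Nat.iter_add. auto.
Qed.

Lemma open_meets U W : is_open U -> is_open W -> (exists x, U x) -> (exists x, W x) ->
  exists n, meets T U W n.
Proof.
  intros HU HW HU0 HW0.
  destruct (C_translate_into_open U HU HU0) as [L1 [a Ha]].
  destruct (C_translate_into_open W HW HW0) as [L2 [b Hb]].
  set (L := Nat.max L1 L2).
  destruct (C_consecutive L) as [p [[x0 [Hx0 _]] _]].
  destruct (open_large_return a (C L) (C_open L) (ex_intro _ x0 Hx0)) as [r [Hr [x [Hx HTx]]]].
  exists (b + r - a), (Nat.iter a T x). split.
  - apply Ha. apply (C_antitone L1 L); auto. lia.
  - rewrite <- Nat.iter_add. replace (b + r - a + a) with (b + r) by lia.
    rewrite Nat.iter_add. apply Hb. apply (C_antitone L2 L); auto. lia.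
Qed.

(* Passing from [U] to the points sent by [T^j] from [U ∩ T^-p U] into [U ∩ T^-(p+1) U]
   widens the gap between two return times by one. *)
Lemma open_return_gap d : forall U, is_open U -> (exists x, U x) ->
  exists m, meets T U U m /\ meets T U U (m + d).
Proof.
  induction d as [|d IH]; intros U HU [x0 Hx0].
  - exists 0. rewrite Nat.add_0_r. split; exists x0; auto.
  - destruct (open_consecutive U HU (ex_intro _ x0 Hx0)) as [p [[x1 Hx1] [x2 Hx2]]].
    set (A := cap_preimage T U p U). set (A' := cap_preimage T U (S p) U).
    assert (HA : is_open A) by (apply open_cap; auto).
    assert (HA' : is_open A') by (apply open_cap; auto).
    destruct (open_meets A A' HA HA') as [j [z Hz]]; [exists x1; auto | exists x2; auto |].
    destruct (IH (cap_preimage T A j A')) as [m [[x [Hx HTx]] [w [Hw HTw]]]];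
      [apply open_cap; auto | exists z; auto |].
    exists (p + m). split.
    + exists x. split; [apply Hx|]. rewrite Nat.iter_add. apply HTx.
    + exists (Nat.iter j T w). split; [apply Hw|].
      destruct HTw as [_ [_ H]]. repeat rewrite <- Nat.iter_add in H; rewrite <- Nat.iter_add.
      replace (p + m + S d + j) with (S p + j + (m + d)) by lia. exact H.
Qed.

(* The gap [a - b] between two given meeting times is absorbed by a pair of
   return times [m, m + (a - b)] of a set mapping [A1] into [B1] and [A2] into [B2]. *)
Lemma common_meet_time_le A1 B1 A2 B2 a b :
  is_open A1 -> is_open B1 -> is_open A2 -> is_open B2 -> b <= a ->
  meets T A1 B1 a -> meets T A2 B2 b -> exists n, meets T A1 B1 n /\ meets T A2 B2 n.
Proof.
  intros HA1 HB1 HA2 HB2 Hba Ha Hb.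
  set (A1' := cap_preimage T A1 a B1). set (A2' := cap_preimage T A2 b B2).
  assert (HA1' : is_open A1') by (apply open_cap; auto).
  assert (HA2' : is_open A2') by (apply open_cap; auto).
  destruct (open_meets A1' A2' HA1' HA2') as [c [z Hz]];
    [destruct Ha as [x Hx]; exists x; auto | destruct Hb as [x Hx]; exists x; auto |].
  destruct (open_return_gap (a - b) (cap_preimage T A1' c A2'))
    as [m [[x [Hx HTx]] [w [Hw HTw]]]]; [apply open_cap; auto | exists z; auto |].
  exists (a + m). split.
  - exists x. split; [apply Hx|]. rewrite Nat.iter_add. apply HTx.
  - exists (Nat.iter c T w). split; [apply Hw|].
    destruct HTw as [_ [_ H]]. repeat rewrite <- Nat.iter_add in H; rewrite <- Nat.iter_add.
    replace (a + m + c) with (b + c + (m + (a - b))) by lia. exact H.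
Qed.

Lemma common_meet_time A1 B1 A2 B2 :
  is_open A1 -> is_open B1 -> is_open A2 -> is_open B2 ->
  (exists x, A1 x) -> (exists x, B1 x) -> (exists x, A2 x) -> (exists x, B2 x) ->
  exists n, meets T A1 B1 n /\ meets T A2 B2 n.
Proof.
  intros HA1 HB1 HA2 HB2 HA10 HB10 HA20 HB20.
  destruct (open_meets A1 B1) as [a Ha]; auto.
  destruct (open_meets A2 B2) as [b Hb]; auto.
  destruct (le_lt_dec b a).
  - apply (common_meet_time_le A1 B1 A2 B2 a b); auto.
  - destruct (common_meet_time_le A2 B2 A1 B1 b a) as [n [H1 H2]]; auto; [lia|].
    exists n; auto.
Qed.

End ConsecutiveReturns.

Lemma iter_prod_map {A : Type} (f : A -> A) n a b :
  Nat.iter n (prod_map f) (a, b) = (Nat.iter n f a, Nat.iter n f b).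
Proof. induction n as [|n IH]; simpl; auto. rewrite IH. reflexivity. Qed.

Lemma return_time_of_nat {A : Type} (f : A -> A) U W n :
  return_time f U W (Z.of_nat n) <-> meets f U W n.
Proof.
  unfold return_time. rewrite (proj2 (Z.leb_le 0 _)) by lia. rewrite Zabs2Nat.id. reflexivity.
Qed.

Lemma consecutive_return_times_iff {A : Type} (f : A -> A) U :
  (exists z : Z, return_time f U U z /\ return_time f U U (z + 1)%Z) <->
  (exists p, meets f U U p /\ meets f U U (S p)).
Proof.
  assert (Habs : forall z, return_time f U U z <-> meets f U U (Z.abs_nat z)).
  { intros z. unfold return_time, meets. destruct (Z.leb 0 z); [reflexivity|].
    split; intros [x [Hx1 Hx2]]; eauto. }
  split.
  - intros [z [Hz HSz]]. rewrite !Habs in Hz, HSz. destruct (Z.leb_spec 0 z).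
    + exists (Z.abs_nat z). split; auto. replace (S (Z.abs_nat z)) with (Z.abs_nat (z + 1)) by lia. auto.
    + exists (Z.abs_nat (z + 1)). split; auto. replace (S (Z.abs_nat (z + 1))) with (Z.abs_nat z) by lia. auto.
  - intros [p [Hp HSp]]. exists (Z.of_nat p). rewrite !Habs.
    replace (Z.abs_nat (Z.of_nat p + 1)) with (S p) by lia. rewrite Zabs2Nat.id. auto.
Qed.

Definition open_set (B : Bratteli) (U : (nat -> nat) -> Prop) : Prop :=
  forall x, U x -> is_path B x /\ exists K, forall y, cylinder B K x y -> U y.

Lemma cylinder_antitone B L L' u x : L <= L' -> cylinder B L' u x -> cylinder B L u x.
Proof. intros HL [Hx Hxu]. split; auto. intros j Hj. apply Hxu. lia. Qed.

Lemma cylinder_open B K u : open_set B (cylinder B K u).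
Proof.
  intros x [Hx Hxu]. split; auto. exists K. intros y [Hy Hyx].
  split; auto. intros j Hj. rewrite Hyx; auto.
Qed.

Lemma path_space_open B : open_set B (is_path B).
Proof. intros x Hx. split; auto. exists 0. intros y [Hy _]. exact Hy. Qed.

Lemma open2_prod B U V : open_set B U -> open_set B V ->
  open2 B (fun q => U (fst q) /\ V (snd q)).
Proof.
  intros HU HV. split.
  - intros [x y] [Hx Hy]. split; [apply (HU x Hx) | apply (HV y Hy)].
  - intros [x y] [Hx Hy]. destruct (HU x Hx) as [_ [K1 HK1]]. destruct (HV y Hy) as [_ [K2 HK2]].
    exists (Nat.max K1 K2). intros y' z' Hy' Hz'. split.
    + apply HK1. apply (cylinder_antitone B _ (Nat.max K1 K2)); auto; lia.
    + apply HK2. apply (cylinder_antitone B _ (Nat.max K1 K2)); auto; lia.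
Qed.

Section BratteliVershikSystem.

Variable B : Bratteli.
Hypothesis HP : properly_ordered B.
Hypothesis Hxmin : forall k, rng B k (xmin B k) = 0.

Let HB : is_ordered_bratteli B := proj1 HP.

Lemma open_cap_preimage U W n : open_set B U -> open_set B W ->
  open_set B (cap_preimage (vershik B) U n W).
Proof.
  intros HU HW x [Hx HTx]. destruct (HU x Hx) as [Hp [K1 HK1]].
  destruct (HW _ HTx) as [_ [K2 HK2]].
  destruct (iter_vershik_continuous B HP Hxmin n x Hp K2) as [K' HK'].
  split; auto. exists (Nat.max K1 K'). intros y [Hy Hyx]. split.
  - apply HK1. split; auto. intros; apply Hyx; lia.
  - apply HK2. split; [apply iter_vershik_path; auto|].
    intros j Hj. apply HK'; auto. intros; apply Hyx; lia.
Qed.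

(* By simplicity, the first edges of a point of [U] connect to the vertex [0] of a
   deeper level [l]; running the tower over that vertex maps the cylinder of [x_min]
   of length [l] into [U]. *)
Lemma open_contains_translate U : open_set B U -> (exists x, U x) ->
  exists L a, forall x, cylinder B L (xmin B) x -> U (Nat.iter a (vershik B) x).
Proof.
  intros HU [x0 Hx0]. destruct (HU x0 Hx0) as [Hp0 [K HK]].
  destruct (proj1 (proj2 HP) K) as [l [HKl Hcon]].
  assert (Hv : src B K (x0 K) < nv B K) by apply (src_lt B HB), (proj1 Hp0).
  assert (H0 : 0 < nv B l) by apply (proj1 (proj2 HB)).
  destruct (fin_path_connect B K l x0 _ 0 (fin_path_of_path B HB x0 K Hp0) H0 (Hcon _ _ Hv H0))
    as [q Hq].
  destruct (tower B HP l 0 _ Hq) as [a Ha].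
  exists l, a. intros x [Hx Hxm]. apply HK. split; [apply iter_vershik_path; auto|].
  intros j Hj. rewrite Ha; auto.
  - unfold glue. destruct (Nat.ltb_spec j l), (Nat.ltb_spec j K); auto; lia.
  - intros i Hi. rewrite Hxm by auto. apply xmin_prefix; auto.
Qed.

Lemma weakly_mixing_of_consecutive_returns :
  (forall L, exists p,
     meets (vershik B) (cylinder B (S L) (xmin B)) (cylinder B (S L) (xmin B)) p /\
     meets (vershik B) (cylinder B (S L) (xmin B)) (cylinder B (S L) (xmin B)) (S p)) ->
  weakly_mixing B.
Proof.
  intros Hc U W [HU1 HU] [HW1 HW] [[u1 u2] Hu] [[w1 w2] Hw].
  destruct (HU1 _ Hu) as [Hu1 Hu2]. destruct (HW1 _ Hw) as [Hw1 Hw2].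
  destruct (HU _ Hu) as [K HK]. destruct (HW _ Hw) as [K' HK']. simpl in *.
  destruct (common_meet_time (nat -> nat) (vershik B) (open_set B) (fun L => cylinder B (S L) (xmin B)))
    with (A1 := cylinder B K u1) (B1 := cylinder B K' w1)
         (A2 := cylinder B K u2) (B2 := cylinder B K' w2)
    as [n [[x [Hx HTx]] [y [Hy HTy]]]];
    try apply cylinder_open; auto.
  - intros; apply open_cap_preimage; auto.
  - intros; apply cylinder_open.
  - intros L L' x HL. apply cylinder_antitone; lia.
  - intros V HV HV0. destruct (open_contains_translate V HV HV0) as [L [a Ha]].
    exists L, a. intros x Hx. apply Ha, (cylinder_antitone B L (S L)); auto.
  - exists u1. split; auto.
  - exists w1. split; auto.
  - exists u2. split; auto.
  - exists w2. split; auto.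
  - exists (Z.of_nat n). apply return_time_of_nat. exists (x, y).
    rewrite iter_prod_map. split; apply HK || apply HK'; auto.
Qed.

Lemma consecutive_returns_of_weakly_mixing : weakly_mixing B -> forall k, exists p,
  meets (vershik B) (cylinder B k (xmin B)) (cylinder B k (xmin B)) p /\
  meets (vershik B) (cylinder B k (xmin B)) (cylinder B k (xmin B)) (S p).
Proof.
  intros HW k. set (Ck := cylinder B k (xmin B)).
  destruct (xmin_spec B HP) as [Hxp _].
  destruct (proj1 (proj2 (proj2 HP))) as [xmax [Hxmax [Hmax _]]].
  assert (HCk : Ck (xmin B)) by (split; auto).
  destruct (HW (fun q => Ck (fst q) /\ Ck (snd q))
               (fun q => Ck (fst q) /\ cap_preimage (vershik B) (is_path B) 1 Ck (snd q)))
    as [z Hz].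
  - apply open2_prod; apply cylinder_open.
  - apply open2_prod; [apply cylinder_open | apply open_cap_preimage;
      [apply path_space_open | apply cylinder_open]].
  - exists (xmin B, xmin B). auto.
  - exists (xmin B, xmax). split; [exact HCk|]. split; [exact Hxmax|].
    simpl. rewrite vershik_max by auto. exact HCk.
  - unfold return_time in Hz. destruct (Z.leb_spec 0 z).
    + destruct Hz as [[a b] [[Ha Hb] HT]]. rewrite iter_prod_map in HT.
      destruct HT as [HTa [_ HTb]].
      exists (Z.abs_nat z). split; [exists a | exists b]; split; auto.
    + destruct Hz as [[a b] [[Ha [_ HTb]] HU]]. rewrite iter_prod_map in HU.
      destruct HU as [HUa HUb]. simpl in *.
      destruct (Z.abs_nat z) as [|p] eqn:E; [lia|].
      exists p. split; [exists (vershik B b) | exists a]; split; auto.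
      rewrite <- Nat.iter_succ_r. exact HUb.
Qed.

End BratteliVershikSystem.

Theorem mainTheorem19 (B : Bratteli) :
  properly_ordered B ->
  (forall k, rng B k (xmin B k) = 0) ->
  (weakly_mixing B <->
   forall k, 1 <= k ->
     exists n : Z,
       return_time (vershik B) (cylinder B k (xmin B)) (cylinder B k (xmin B)) n /\
       return_time (vershik B) (cylinder B k (xmin B)) (cylinder B k (xmin B)) (n + 1)%Z).
Proof.
  intros HP Hxmin. split.
  - intros HW k _. apply consecutive_return_times_iff.
    apply (consecutive_returns_of_weakly_mixing B HP Hxmin HW).
  - intros Hc. apply (weakly_mixing_of_consecutive_returns B HP Hxmin).
    intros L. apply consecutive_return_times_iff, Hc. lia.
Qed.
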